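(* Let $m=p_1^{m_1}\cdots p_k^{m_k}$ and let $(K_n,\alpha)$ be an edge-labeled complete graph over $\mathbb{Z}/m\mathbb{Z}$ with ordered edge labels $a_1,\dots,a_{r_n}$, where each $a_s=p_1^{n_{s1}}\cdots p_k^{n_{sk}}$ with $0\le n_{sj}\le m_j$ is a positive divisor of $m$ representing a zero divisor of $\mathbb{Z}/m\mathbb{Z}$. (1) If $a_{r_n}\mid a_{r_n-1}\mid\cdots\mid a_2\mid a_1\mid m$ and $m\neq a_1$, then the set $B_m$ consisting of $(1,1,\dots,1)$ together with, for each $k=2,\dots,n$, the vector whose $v_k$-entry is $a_{r_{k-1}+1}$ and all other entries are $0$ (i.e. $(0,a_1,0,\dots,0)$, $(0,0,a_2,0,\dots,0)$, $(0,0,0,a_4,0,\dots,0)$, $\dots$, $(0,\dots,0,a_{r_{n-1}+1})$), is a minimum flow-up generating set of $[\mathbb{Z}/m\mathbb{Z}]_{(K_n,\alpha)}$; thus its rank is $n$. (2) If $a_1\mid a_2\mid\cdots\mid a_{r_n}\mid m$ and $m\ne a_{r_n}$, then the set $B_m$ consisting of $(1,1,\dots,1)$ together with, for each $k=2,\dots,n$, the vector whose entries at $v_k,v_{k+1},\dots,v_n$ equal $a_{r_n-(n-k)}$ and whose entries at $v_1,\dots,v_{k-1}$ are $0$, is a minimum flow-up generating set of $[\mathbb{Z}/m\mathbb{Z}]_{(K_n,\alpha)}$; thus its rank is $n$.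
   Context: A spline on an edge-labeled graph $(G,\alpha)$ over $\mathbb{Z}/m\mathbb{Z}$ (edges labeled by nonzero ideals) is a vector $(f_{v_1},\dots,f_{v_n})\in(\mathbb{Z}/m\mathbb{Z})^n$ with $f_{v_i}-f_{v_j}\in\alpha(v_iv_j)$ for every edge; the splines form a $\mathbb{Z}$-module $[\mathbb{Z}/m\mathbb{Z}]_{(G,\alpha)}$. An $i$-th flow-up class is a spline with $f_{v_i}\ne0$ and $f_{v_t}=0$ for $t<i$. A minimum generating set is a generating set of the $\mathbb{Z}$-module of smallest possible size, this size being the rank; a minimum flow-up generating set is a minimum generating set consisting of flow-up classes. $K_n$ is the complete graph on $v_1,\dots,v_n$; $r_k=k(k-1)/2$. The edges are enumerated so that for $1\le j<k\le n$ the edge $v_jv_k$ is $e_{r_{k-1}+j}$ (so $e_1=v_1v_2$, $e_2=v_1v_3$, $e_3=v_2v_3$, $e_4=v_1v_4,\dots$). ''Ordered edge labels $a_1,\dots,a_{r_n}$'' means $\alpha(e_s)$ is the ideal generated by $a_s+m\mathbb{Z}$. Vectors are written $(f_{v_1},\dots,f_{v_n})$. *)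

From mathcomp Require Import all_boot all_algebra.
Set Implicit Arguments. Unset Strict Implicit. Unset Printing Implicit Defensive.
Import GRing.Theory.
Local Open Scope ring_scope.

Definition r (k : nat) : nat := ((k * k.-1) %/ 2)%N.

(* Vertices v_1..v_n are the ordinals 0..n-1 of 'I_n.  For 0-indexed i < l,
   the edge v_{i+1} v_{l+1} is e_{r_l + i + 1}. *)
Definition edge_index (i l : nat) : nat := (r l + i.+1)%N.

Definition in_ideal_gen (R : comPzRingType) (x y : R) : Prop := exists z : R, y = z * x.

Definition zero_divisor (R : pzRingType) (x : R) : Prop := exists y : R, y != 0 /\ x * y = 0.

Definition vec (m n : nat) := {ffun 'I_n -> 'Z_m}.

Definition is_spline (m n : nat) (a : nat -> nat) (f : vec m n) : Prop :=
  forall i l : 'I_n, (i < l)%N -> in_ideal_gen ((a (edge_index i l))%:R : 'Z_m) (f i - f l).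

Definition zspan (m n : nat) (S : {set vec m n}) (f : vec m n) : Prop :=
  exists c : vec m n -> int, f = \sum_(g in S) g *~ c g.

Definition generates (m n : nat) (a : nat -> nat) (S : {set vec m n}) : Prop :=
  (forall g, g \in S -> is_spline a g) /\ (forall f, is_spline a f <-> zspan S f).

Definition min_gen_set (m n : nat) (a : nat -> nat) (S : {set vec m n}) : Prop :=
  generates a S /\ (forall S' : {set vec m n}, generates a S' -> (#|S| <= #|S'|)%N).

(* i-th flow-up class (i 0-indexed) *)
Definition flow_up_class (m n : nat) (i : 'I_n) (f : vec m n) : Prop :=
  f i != 0 /\ (forall t : 'I_n, (t < i)%N -> f t = 0).

Definition is_flow_up (m n : nat) (f : vec m n) : Prop := exists i : 'I_n, flow_up_class i f.

Definition min_flow_up_gen_set (m n : nat) (a : nat -> nat) (S : {set vec m n}) : Prop :=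
  min_gen_set a S /\ (forall g, g \in S -> is_flow_up g).

Definition ones (m n : nat) : vec m n := [ffun _ => 1].

(* part (1): (1,...,1) and, for k = l+1 = 2..n, a_{r_{k-1}+1} at v_k *)
Definition B1 (m n : nat) (a : nat -> nat) : {set vec m n} :=
  ones m n |: [set [ffun j : 'I_n => if j == l then ((a (r l + 1)%N)%:R : 'Z_m) else 0]
               | l : 'I_n & (0 < l)%N].

(* part (2): (1,...,1) and, for k = l+1 = 2..n, a_{r_n-(n-k)} at v_k..v_n *)
Definition B2 (m n : nat) (a : nat -> nat) : {set vec m n} :=
  ones m n |: [set [ffun j : 'I_n => if (l <= j)%N then ((a (r n - (n - l.+1))%N)%:R : 'Z_m) else 0]
               | l : 'I_n & (0 < l)%N].

(* Each set consists of flow-up classes G_1, ..., G_n, where G_k has first nonzero entry c_k at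
   v_k, together with a predecessor map pi (pi v_k = v_1 in (1), pi v_k = v_(k-1) in (2)) such
   that for every spline f the difference f(v_k) - f(pi v_k) lies in (c_k) (for k = 1 read
   f(v_1)), while for G_l these differences vanish except at v_l, where it is c_l.  Clearing the
   first nonzero entry of a spline with a multiple of some G_k shows that the G_k generate.
   For minimality: a_1 (resp. a_(r_n)) is a proper divisor of m, so some prime p has c_k p | m for
   all k.  Weighting the k-th difference by m/(c_k p) turns splines into p-torsion vectors, sends
   the combinations of the G_k with coefficients below p to p^n distinct vectors, and sends the
   span of any k generators to at most p^k vectors. *)

From HB Require Import structures.
From mathcomp Require Import all_boot all_algebra.
From mathcomp Require Import zify.
Set Implicit Arguments. Unset Strict Implicit. Unset Printing Implicit Defensive.
Import GRing.Theory.
Local Open Scope ring_scope.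

Lemma rE k : r k = 'C(k, 2).
Proof. by rewrite /r bin2 divn2. Qed.

Lemma rS k : r k.+1 = (r k + k)%N.
Proof. by rewrite !rE binS bin1. Qed.

Lemma leq_r {k l} : (k <= l)%N -> (r k <= r l)%N.
Proof. by rewrite !rE; apply: leq_bin2l. Qed.

Lemma leq_edge_index i l i' l' :
  (i <= i')%N -> (l <= l')%N -> (edge_index i l <= edge_index i' l')%N.
Proof. by move=> ii' ll'; rewrite leq_add ?leq_r. Qed.

Lemma edge_index_bounds n i l :
  (i < l)%N -> (l < n)%N -> (1 <= edge_index i l <= r n)%N.
Proof. by move=> il ln; have := leq_r ln; rewrite rS /edge_index; lia. Qed.

Section DivisorChains.
Variables (a : nat -> nat) (lo hi : nat).

Lemma homo_chain (R : nat -> nat -> Prop) :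
  (forall x, R x x) -> (forall y x z, R x y -> R y z -> R x z) ->
  (forall s, lo <= s < hi -> R (a s) (a s.+1))%N ->
  forall s t, (lo <= s)%N -> (s <= t)%N -> (t <= hi)%N -> R (a s) (a t).
Proof.
move=> refl trans step s t los st thi; pose D := [pred s | lo <= s <= hi]%N.
have D_convex : {in D &, forall i j k, i < k < j -> k \in D}%N.
  by move=> i j /andP [? _] /andP [_ ?] k /andP [? ?]; apply/andP; split; lia.
have D_step : {in D, forall i, i.+1 \in D -> R (a i) (a i.+1)}.
  by move=> i /andP [loi _] /andP [_ ihi]; apply: step; rewrite loi.
have [sD tD] : s \in D /\ t \in D by rewrite !inE; lia.
exact: (@homo_leq_in _ D a R refl trans D_convex D_step s t sD tD st).
Qed.

Lemma chain_dvdn_up : (forall s, lo <= s < hi -> a s %| a s.+1)%N ->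
  forall s t, (lo <= s -> s <= t -> t <= hi -> a s %| a t)%N.
Proof. by apply: (@homo_chain (fun x y => x %| y)%N) => // y x z; apply: dvdn_trans. Qed.

Lemma chain_dvdn_down : (forall s, lo <= s < hi -> a s.+1 %| a s)%N ->
  forall s t, (lo <= s -> s <= t -> t <= hi -> a t %| a s)%N.
Proof.
by apply: (@homo_chain (fun x y => y %| x)%N) => // y x z xy yz; apply: dvdn_trans yz xy.
Qed.

End DivisorChains.

Lemma proper_divisor_prime_mul M A : (0 < M)%N -> (A %| M)%N -> A != M ->
  exists2 p, prime p & (A * p %| M)%N.
Proof.
move=> M0 AM AneM; have A0 : (0 < A)%N by apply: dvdn_gt0 AM.
have q1 : (1 < M %/ A)%N by rewrite ltn_divRL // mul1n ltn_neqAle AneM dvdn_leq.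
exists (pdiv (M %/ A)); first exact: pdiv_prime.
by rewrite -{2}[M](divnK AM) mulnC dvdn_pmul2r // pdiv_dvd.
Qed.

Section IdealGen.
Variable R : comPzRingType.
Implicit Types x y z : R.

Lemma in_ideal_gen0 x : in_ideal_gen x 0.
Proof. by exists 0; rewrite mul0r. Qed.

Lemma in_ideal_gen_id x : in_ideal_gen x x.
Proof. by exists 1; rewrite mul1r. Qed.

Lemma in_ideal_genD x y z : in_ideal_gen x y -> in_ideal_gen x z -> in_ideal_gen x (y + z).
Proof. by move=> [u ->] [v ->]; exists (u + v); rewrite mulrDl. Qed.

Lemma in_ideal_genMz x y k : in_ideal_gen x y -> in_ideal_gen x (y *~ k).
Proof. by move=> [u ->]; exists (u *~ k); rewrite mulrzAl. Qed.

Lemma in_ideal_genN x y : in_ideal_gen x y -> in_ideal_gen x (- y).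
Proof. by move=> /(in_ideal_genMz (-1)); rewrite mulrN1z. Qed.

Lemma in_ideal_genB x y z : in_ideal_gen x y -> in_ideal_gen x z -> in_ideal_gen x (y - z).
Proof. by move=> xy /in_ideal_genN; apply: in_ideal_genD. Qed.

Lemma in_ideal_gen_dvdn (d e : nat) y :
  (d %| e)%N -> in_ideal_gen (e%:R : R) y -> in_ideal_gen (d%:R : R) y.
Proof. by move=> /dvdnP [k ->] [u ->]; exists (u * k%:R); rewrite natrM mulrA. Qed.

End IdealGen.

Section Splines.
Variables (m n : nat) (a : nat -> nat).
Implicit Types f g : vec m n.

Lemma spline_ones : is_spline a (ones m n).
Proof. by move=> i l _; rewrite !ffunE subrr; apply: in_ideal_gen0. Qed.

Lemma spline0 : is_spline a (0 : vec m n).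
Proof. by move=> i l _; rewrite !ffunE subrr; apply: in_ideal_gen0. Qed.

Lemma splineD f g : is_spline a f -> is_spline a g -> is_spline a (f + g).
Proof.
move=> sf sg i l il; rewrite !ffunE opprD addrACA.
by apply: in_ideal_genD; [apply: sf | apply: sg].
Qed.

Lemma splineMz f k : is_spline a f -> is_spline a (f *~ k).
Proof. by move=> sf i l il; rewrite !ffunMzE -mulrzBl; apply/in_ideal_genMz/sf. Qed.

Lemma splineB f g : is_spline a f -> is_spline a g -> is_spline a (f - g).
Proof. by move=> sf /(splineMz (-1)); rewrite mulrN1z; apply: splineD. Qed.

Lemma spline_sum (I : finType) (P : pred I) (F : I -> vec m n) :
  (forall i, P i -> is_spline a (F i)) -> is_spline a (\sum_(i | P i) F i).
Proof. by move=> sF; apply: big_ind => //; [apply: spline0 | apply: splineD]. Qed.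

Lemma spline_zspan (S : {set vec m n}) f :
  (forall g, g \in S -> is_spline a g) -> zspan S f -> is_spline a f.
Proof. by move=> sS [c ->]; apply: spline_sum => g /sS /splineMz. Qed.

End Splines.

Section LinearSpan.
Variables (m n : nat) (S : {set vec m n}).

Lemma zspan0 : zspan S 0.
Proof. by exists (fun _ => 0); rewrite big1 // => g _; rewrite mulr0z. Qed.

Lemma zspanD f g : zspan S f -> zspan S g -> zspan S (f + g).
Proof.
move=> [c ->] [d ->]; exists (fun x => c x + d x).
by rewrite -big_split; apply: eq_bigr => x _; rewrite mulrzDr.
Qed.

Lemma zspanMz f k : zspan S f -> zspan S (f *~ k).
Proof.
move=> [c ->]; exists (fun x => c x * k).
by rewrite mulrz_suml; apply: eq_bigr => x _; rewrite mulrzA.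
Qed.

Lemma zspan_mem g : g \in S -> zspan S g.
Proof.
move=> gS; exists (fun x => (x == g)%:Z).
by rewrite (bigD1 g) //= eqxx big1 ?addr0 // => x /andP [_ /negbTE ->].
Qed.

End LinearSpan.

Lemma mulrz_torsion (V : zmodType) (x : V) (p : nat) (z : int) :
  (0 < p)%N -> x *+ p = 0 -> x *~ z = x *+ `|(z %% p)%Z|%N.
Proof.
move=> p0 xp; rewrite {1}(divz_eq z p) mulrzDr -mulrzA_C -pmulrn xp mul0rz add0r.
by rewrite pmulrn gez0_abs // modz_ge0 // lt0n_neq0.
Qed.

Lemma card_le_torsion_span (A : finType) (R : finZmodType) (I : finType) (T : {set I})
    (h : I -> {ffun A -> R}) (p : nat) (X : {set {ffun A -> R}}) :
  (0 < p)%N -> (forall i, i \in T -> h i *+ p = 0) ->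
  (forall x, x \in X -> exists c : I -> int, x = \sum_(i in T) h i *~ c i) ->
  (#|X| <= p ^ #|T|)%N.
Proof.
move=> p0 tors comb.
have mod_lt z : (`|(z %% p)%Z| < p)%N.
  by rewrite -ltz_nat gez0_abs ?modz_ge0 ?ltz_pmod ?lt0n_neq0.
pose F (t : {ffun 'I_#|T| -> 'I_p}) := \sum_(k < #|T|) h (enum_val k) *+ t k.
have XF : X \subset F @: setT.
  apply/subsetP => x /comb [c ->]; rewrite big_enum_val.
  apply/imsetP; exists [ffun k => Ordinal (mod_lt (c (enum_val k)))] => //.
  by apply: eq_bigr => k _; rewrite ffunE (mulrz_torsion _ p0) // tors // enum_valP.
have := leq_trans (subset_leq_card XF) (leq_imset_card _ _).
by rewrite cardsT card_ffun !card_ord.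
Qed.

Lemma Zp_natr_neq0 m k : (0 < k < m.+2)%N -> (k%:R : 'Z_m.+2) != 0.
Proof.
by case/andP=> k0 km; apply/eqP => /(congr1 val); rewrite /= val_Zp_nat // modn_small //; lia.
Qed.

Definition bdiff (M n : nat) (pi : 'I_n -> 'I_n) (f : vec M n) : vec M n :=
  [ffun j => f j - (if (j : nat) == 0%N then 0 else f (pi j))].

Fact bdiff_is_zmod_morphism M n pi : zmod_morphism (@bdiff M n pi).
Proof.
move=> f g; apply/ffunP => j; rewrite !ffunE; case: ifP => _; first by rewrite !subr0.
by rewrite !opprB addrACA [RHS]addrACA; congr (_ + _); apply: addrC.
Qed.

HB.instance Definition _ M n pi :=
  Algebra.isZmodMorphism.Build (vec M n) (vec M n) (@bdiff M n pi) (@bdiff_is_zmod_morphism M n pi).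

Section FlowUpBasis.
Variables (m n : nat) (a : nat -> nat).
Local Notation M := m.+2.
Variables (G : 'I_n -> vec M n) (c : 'I_n -> nat) (pi : 'I_n -> 'I_n) (p : nat).
Hypothesis G_spline : forall l, is_spline a (G l).
Hypothesis G_flow_up : forall l i : 'I_n, (i < l)%N -> G l i = 0.
Hypothesis pi_lt : forall j : 'I_n, (0 < j)%N -> (pi j < j)%N.
Hypothesis bdiff_spline :
  forall f j, is_spline a f -> in_ideal_gen ((c j)%:R : 'Z_M) (bdiff pi f j).
Hypothesis bdiff_G : forall l, bdiff pi (G l) = [ffun j => if j == l then (c l)%:R else 0].
Hypothesis p_gt1 : (1 < p)%N.
Hypothesis c_p_dvd : forall j, (c j * p %| M)%N.

Lemma bdiff_flow_up (f : vec M n) (j : 'I_n) :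
  (forall i : 'I_n, (i < j)%N -> f i = 0) -> bdiff pi f j = f j.
Proof.
move=> f0; rewrite ffunE; case: eqP => [_|/eqP j0]; first by rewrite subr0.
by rewrite (f0 (pi j)) ?subr0 // pi_lt // lt0n.
Qed.

Lemma c_bounds l : (0 < c l < M)%N.
Proof.
have := dvdn_gt0 (ltn0Sn _) (c_p_dvd l); have := dvdn_leq (ltn0Sn _) (c_p_dvd l).
rewrite muln_gt0; nia.
Qed.

Lemma G_diag l : G l l = (c l)%:R.
Proof. by rewrite -(bdiff_flow_up (@G_flow_up l)) bdiff_G ffunE eqxx. Qed.

Lemma G_diag_neq0 l : G l l != 0.
Proof. by rewrite G_diag Zp_natr_neq0 ?c_bounds. Qed.

Lemma G_inj : injective G.
Proof.
move=> l l' eqG; apply: val_inj; case: (ltngtP l l') => // lt.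
  by have := G_diag_neq0 l; rewrite eqG G_flow_up ?eqxx.
by have := G_diag_neq0 l'; rewrite -eqG G_flow_up ?eqxx.
Qed.

Lemma zspan_spline (S : {set vec M n}) : (forall l, G l \in S) ->
  forall f, is_spline a f -> zspan S f.
Proof.
move=> GS; suff: forall k, (k <= n)%N -> forall f, is_spline a f ->
    (forall i : 'I_n, (i < n - k)%N -> f i = 0) -> zspan S f.
  by move=> elim_from f sf; apply: (elim_from n) => // i; rewrite subnn.
elim=> [_|k IH kn] f sf f0.
  suff -> : f = 0 by apply: zspan0.
  by apply/ffunP => i; rewrite ffunE f0 // subn0.
have jn : (n - k.+1 < n)%N by lia.
pose j := Ordinal jn.
have [z fj] : in_ideal_gen ((c j)%:R : 'Z_M) (f j).
  by rewrite -bdiff_flow_up; [apply: bdiff_spline | apply: f0].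
rewrite -(subrK (G j *~ (z : nat)) f); apply: zspanD; last exact/zspanMz/zspan_mem.
apply: IH (ltnW kn) _ _ _; first by apply/splineB/splineMz.
move=> i ik; rewrite !ffunE ffunMzE.
have [ij|ji] := ltnP i j; first by rewrite f0 // G_flow_up // mul0rz subr0.
have -> : i = j by apply: val_inj; move: ji; rewrite /j /=; lia.
by rewrite fj G_diag -pmulrn -[X in _ - X]mulr_natr natr_Zp mulrC subrr.
Qed.

Lemma generates_G : generates a [set G l | l : 'I_n].
Proof.
split=> [g /imsetP [l _ ->] // | f]; split; first by apply: zspan_spline => l; apply: imset_f.
by apply: spline_zspan => g /imsetP [l _ ->].
Qed.

Let q := (M %/ p)%N.

Definition weighted_bdiff (f : vec M n) : vec M n :=
  [ffun j => bdiff pi f j * (M %/ (c j * p))%:R].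

Fact weighted_bdiff_is_zmod_morphism : zmod_morphism weighted_bdiff.
Proof. by move=> f g; apply/ffunP => j; rewrite ffunE raddfB !ffunE mulrBl. Qed.

HB.instance Definition _ :=
  Algebra.isZmodMorphism.Build (vec M n) (vec M n) weighted_bdiff weighted_bdiff_is_zmod_morphism.

Lemma weighted_bdiff_torsion f : is_spline a f -> weighted_bdiff f *+ p = 0.
Proof.
move=> /bdiff_spline sf; apply/ffunP => j; rewrite ffunMnE ffunE.
have [z ->] := sf j; rewrite -!mulrA -!mulrnAr -mulrnA -!natrM mulnCA divnK //.
by rewrite pchar_Zp // mulr0 ffunE.
Qed.

Lemma weighted_bdiff_G l : weighted_bdiff (G l) = [ffun j => if j == l then q%:R else 0].
Proof.
apply/ffunP => j; rewrite ffunE bdiff_G !ffunE; case: eqP => [->|_]; last by rewrite mul0r.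
rewrite -natrM /q; congr (_%:R).
by rewrite -[in RHS](divnK (c_p_dvd l)) mulnA mulnK 1?mulnC // ltnW.
Qed.

Lemma weighted_bdiff_comb (t : {ffun 'I_n -> 'I_p}) :
  weighted_bdiff (\sum_l G l *~ t l) = [ffun j => (q * t j)%:R].
Proof.
apply/ffunP => j; rewrite raddf_sum sum_ffunE ffunE (bigD1 j) //= big1 ?addr0.
  by rewrite raddfMz ffunMzE /= weighted_bdiff_G ffunE eqxx -pmulrn natrM mulr_natr.
by move=> l /negbTE jl; rewrite raddfMz ffunMzE /= weighted_bdiff_G ffunE eq_sym jl mul0rz.
Qed.

Lemma weighted_bdiff_comb_inj :
  injective (fun t : {ffun 'I_n -> 'I_p} => weighted_bdiff (\sum_l G l *~ t l)).
Proof.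
move=> t t' /=; rewrite !weighted_bdiff_comb => /ffunP eq_t; apply/ffunP => j.
have qp : (q * p = M)%N by rewrite divnK // (dvdn_trans (dvdn_mull _ (dvdnn p)) (c_p_dvd j)).
have q0 : (0 < q)%N by rewrite lt0n; apply: contra_eqN qp => /eqP ->.
have lt x : (x < p)%N -> (q * x < M)%N by move=> xp; rewrite -qp ltn_pmul2l.
have := eq_t j; rewrite !ffunE => /(congr1 val); rewrite /= !val_Zp_nat // !modn_small ?lt //.
by move/eqP; rewrite eqn_pmul2l // => /eqP /val_inj.
Qed.

Lemma generates_card_ge (S : {set vec M n}) : generates a S -> (n <= #|S|)%N.
Proof.
move=> [Ss spanS].
pose X := [set weighted_bdiff (\sum_l G l *~ t l) | t : {ffun 'I_n -> 'I_p}].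
have cardX : #|X| = (p ^ n)%N.
  by rewrite card_imset ?cardsT ?card_ffun ?card_ord //; apply: weighted_bdiff_comb_inj.
rewrite -(leq_exp2l _ _ p_gt1) -cardX; apply: (card_le_torsion_span (ltnW p_gt1)).
  by move=> g /Ss; apply: weighted_bdiff_torsion.
move=> _ /imsetP [t _ ->].
have [cz ->] : zspan S (\sum_l G l *~ t l).
  by apply/spanS/spline_sum => l _; apply: splineMz.
by exists cz; rewrite raddf_sum; apply: eq_bigr => g _; apply: raddfMz.
Qed.

Theorem flow_up_basis :
  min_flow_up_gen_set a [set G l | l : 'I_n] /\ #|[set G l | l : 'I_n]| = n.
Proof.
have card_G : #|[set G l | l : 'I_n]| = n by rewrite card_imset ?card_ord //; apply: G_inj.
split=> //; split.
  by split=> [|S' /generates_card_ge]; [apply: generates_G | rewrite card_G].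
by move=> g /imsetP [l _ ->]; exists l; split; [apply: G_diag_neq0 | apply: G_flow_up].
Qed.

End FlowUpBasis.

Lemma setU1_imset_pos (T : finType) n (x : T) (F : 'I_n -> T) (o : 'I_n) :
  (o : nat) = 0%N ->
  x |: [set F l | l : 'I_n & (0 < l)%N] =
  [set if (l : nat) == 0%N then x else F l | l : 'I_n].
Proof.
move=> o0; apply/setP => y; rewrite in_setU1.
apply/idP/imsetP => [/orP [/eqP -> | /imsetP [l l0 ->]] | [l _ ->]].
- by exists o; rewrite // o0.
- by exists l; rewrite // ifN // -lt0n; rewrite inE in l0.
- have [_|l0] := posnP l; first by rewrite eqxx.
  by rewrite imset_f ?orbT // inE.
Qed.

Section IndicatorVectors.
Variables (m n : nat) (a : nat -> nat).

Lemma spline_indicator (P : pred 'I_n) (x : nat) :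
  (forall i l : 'I_n, (i < l)%N -> P i != P l -> (a (edge_index i l) %| x)%N) ->
  is_spline a [ffun j => if P j then (x%:R : 'Z_m) else 0].
Proof.
move=> dvd_x i l il; rewrite !ffunE.
have x_in (Pil : P i != P l) : in_ideal_gen ((a (edge_index i l))%:R : 'Z_m) x%:R.
  exact: in_ideal_gen_dvdn (dvd_x i l il Pil) (in_ideal_gen_id _).
case: (P i) (P l) x_in => [] [] x_in; rewrite ?subrr ?subr0 ?sub0r.
- exact: in_ideal_gen0.
- exact: x_in.
- exact/in_ideal_genN/x_in.
- exact: in_ideal_gen0.
Qed.

Lemma bdiff_ones pi (o : 'I_n) : (o : nat) = 0%N ->
  bdiff pi (ones m n) = [ffun j => if j == o then 1 else 0].
Proof.
move=> o0; apply/ffunP => j; rewrite !ffunE -val_eqE /= o0.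
by case: eqP; rewrite ?subr0 ?subrr.
Qed.

End IndicatorVectors.

Section DecreasingLabels.
Variables (m n : nat) (a : nat -> nat).
Local Notation M := m.+2.
Hypothesis n_gt0 : (0 < n)%N.
Hypothesis a_dec : forall s, (1 <= s < r n)%N -> (a s.+1 %| a s)%N.
Hypothesis a1_dvd : (a 1 %| M)%N.
Hypothesis a1_neq : a 1 <> M.

Let v1 : 'I_n := Ordinal n_gt0.
Let c (l : 'I_n) := if (l : nat) == 0%N then 1%N else a (r l + 1).
Let G (l : 'I_n) : vec M n := if (l : nat) == 0%N then ones M n
  else [ffun j : 'I_n => if j == l then ((a (r l + 1))%:R : 'Z_M) else 0].

Let label_bounds (l : 'I_n) : (0 < l)%N -> (1 <= r l + 1 <= r n)%N.
Proof. by move=> l0; apply: edge_index_bounds l0 (ltn_ord l). Qed.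

Let c_dvd_a1 l : (c l %| a 1)%N.
Proof.
rewrite /c; have [_|l_pos] := posnP l; first exact: dvd1n.
have /andP [_ le_rn] := label_bounds l_pos.
by apply: (chain_dvdn_down a_dec); lia.
Qed.

Let G_spline l : is_spline a (G l).
Proof.
rewrite /G; have [_|l_pos] := posnP l; first exact: spline_ones.
apply: spline_indicator => i l' il' Pil.
have /andP [le1 le_rn] := edge_index_bounds il' (ltn_ord l').
apply: (chain_dvdn_down a_dec) => //; first by have /andP [] := label_bounds l_pos.
have ll' : (l <= l')%N.
  rewrite leqNgt; apply: contra Pil => lt_l'l.
  by rewrite -!val_eqE /= !ltn_eqF // (ltn_trans il').
by have := leq_r ll'; rewrite /edge_index; lia.
Qed.

Let G_flow_up (l i : 'I_n) : (i < l)%N -> G l i = 0.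
Proof.
move=> il; rewrite /G gtn_eqF ?ffunE; last exact: leq_ltn_trans (leq0n i) il.
by rewrite ifN // -val_eqE neq_ltn il.
Qed.

Let pi (j : 'I_n) := v1.

Let bdiff_spline f j : is_spline a f -> in_ideal_gen ((c j)%:R : 'Z_M) (bdiff pi f j).
Proof.
move=> sf; rewrite ffunE /c; have [_|j_pos] := posnP j; first by exists (f j - 0); rewrite mulr1.
by rewrite -opprB; apply/in_ideal_genN/(sf v1 j j_pos).
Qed.

Let bdiff_G l : bdiff pi (G l) = [ffun j => if j == l then (c l)%:R else 0].
Proof.
rewrite /G /c; have [l0|l_pos] := posnP l; first exact: bdiff_ones.
have v1l : (v1 == l) = false by apply/negbTE; rewrite -val_eqE /= eq_sym -lt0n.
by apply/ffunP => j; rewrite !ffunE v1l if_same subr0.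
Qed.

Theorem B1_min_flow_up : min_flow_up_gen_set a (B1 M n a) /\ #|B1 M n a| = n.
Proof.
have [p p_prime a1p_dvd] := proper_divisor_prime_mul (ltn0Sn _) a1_dvd (introN eqP a1_neq).
rewrite /B1 (setU1_imset_pos _ _ (o := v1)) //.
apply: (@flow_up_basis m n a G c pi p) => //; first exact: prime_gt1.
by move=> j; apply: dvdn_trans a1p_dvd; rewrite dvdn_mul ?c_dvd_a1.
Qed.

End DecreasingLabels.

Section IncreasingLabels.
Variables (m n : nat) (a : nat -> nat).
Local Notation M := m.+2.
Hypothesis n_gt0 : (0 < n)%N.
Hypothesis a_inc : forall s, (1 <= s < r n)%N -> (a s %| a s.+1)%N.
Hypothesis aN_dvd : (a (r n) %| M)%N.
Hypothesis aN_neq : a (r n) <> M.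

Let v1 : 'I_n := Ordinal n_gt0.

Let vn_lt : (n.-1 < n)%N.
Proof. by rewrite ltn_predL. Qed.

Let vn : 'I_n := Ordinal vn_lt.
Let pi (j : 'I_n) : 'I_n := Ordinal (leq_ltn_trans (leq_pred j) (ltn_ord j)).

Let c (l : 'I_n) := if (l : nat) == 0%N then 1%N else a (r n - (n - l.+1)).
Let G (l : 'I_n) : vec M n := if (l : nat) == 0%N then ones M n
  else [ffun j : 'I_n => if (l <= j)%N then ((a (r n - (n - l.+1)))%:R : 'Z_M) else 0].

Let label_index (l : 'I_n) : (0 < l)%N -> (r n - (n - l.+1))%N = edge_index l.-1 n.-1.
Proof.
move=> l_pos; have := rS n.-1; rewrite prednK // /edge_index.
by have := ltn_ord l; lia.
Qed.

Let label_bounds (l : 'I_n) : (0 < l)%N -> (1 <= edge_index l.-1 n.-1 <= r n)%N.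
Proof. by move=> l_pos; apply: edge_index_bounds; have := ltn_ord l; lia. Qed.

Let c_dvd_aN l : (c l %| a (r n))%N.
Proof.
rewrite /c; have [_|l_pos] := posnP l; first exact: dvd1n.
have /andP [le1 le_rn] := label_bounds l_pos.
by rewrite label_index //; apply: (chain_dvdn_up a_inc).
Qed.

Let G_spline l : is_spline a (G l).
Proof.
rewrite /G; have [_|l_pos] := posnP l; first exact: spline_ones.
apply: spline_indicator => i l' il' Pil; rewrite label_index //.
have /andP [le1 _] := edge_index_bounds il' (ltn_ord l').
have /andP [_ le_rn] := label_bounds l_pos.
apply: (chain_dvdn_up a_inc) => //; apply: leq_edge_index.
  by move: Pil; rewrite leqNgt; case: ltnP => //; lia.
by rewrite -ltnS prednK // ltn_ord.
Qed.

Let G_flow_up (l i : 'I_n) : (i < l)%N -> G l i = 0.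
Proof.
move=> il; rewrite /G gtn_eqF ?ffunE; last exact: leq_ltn_trans (leq0n i) il.
by rewrite leqNgt il.
Qed.

Let pi_lt (j : 'I_n) : (0 < j)%N -> (pi j < j)%N.
Proof. by move=> j_pos; rewrite /= prednK. Qed.

Let bdiff_spline f j : is_spline a f -> in_ideal_gen ((c j)%:R : 'Z_M) (bdiff pi f j).
Proof.
move=> sf; rewrite ffunE /c; have [_|j_pos] := posnP j; first by exists (f j - 0); rewrite mulr1.
rewrite label_index //=.
have -> : f j - f (pi j) = (f j - f vn) - (f (pi j) - f vn) by rewrite opprB addrA subrK.
apply: in_ideal_genB; last by apply: sf; rewrite /= -ltnS !prednK // ltn_ord.
have [j_vn|j_vn] := eqVneq j vn; first by rewrite j_vn subrr; apply: in_ideal_gen0.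
have lt_j_vn : (j < vn)%N by rewrite ltn_neqAle j_vn -ltnS prednK // ltn_ord.
apply: in_ideal_gen_dvdn (sf j vn lt_j_vn).
have /andP [_ le_rn] := edge_index_bounds lt_j_vn (ltn_ord vn).
have /andP [le1 _] := label_bounds j_pos.
have succ_index : edge_index j vn = (edge_index j.-1 n.-1).+1.
  by rewrite /edge_index /= prednK // addnS.
by rewrite succ_index; apply: a_inc; rewrite le1 -succ_index.
Qed.

Let bdiff_G l : bdiff pi (G l) = [ffun j => if j == l then (c l)%:R else 0].
Proof.
rewrite /G /c; have [l0|l_pos] := posnP l; first exact: bdiff_ones.
apply/ffunP => j; rewrite !ffunE /= -val_eqE /=.
case: (ltngtP l j) => [lt_lj|lt_jl|<-].
- have -> : (l <= j.-1)%N by lia.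
  by rewrite gtn_eqF ?subrr // (leq_ltn_trans (leq0n l)).
- have -> : (l <= j.-1)%N = false by lia.
  by rewrite if_same subrr.
- have -> : (l <= l.-1)%N = false by lia.
  by rewrite if_same subr0.
Qed.

Theorem B2_min_flow_up : min_flow_up_gen_set a (B2 M n a) /\ #|B2 M n a| = n.
Proof.
have [p p_prime aNp_dvd] := proper_divisor_prime_mul (ltn0Sn _) aN_dvd (introN eqP aN_neq).
rewrite /B2 (setU1_imset_pos _ _ (o := v1)) //.
apply: (@flow_up_basis m n a G c pi p) => //; first exact: prime_gt1.
by move=> j; apply: dvdn_trans aNp_dvd; rewrite dvdn_mul ?c_dvd_aN.
Qed.

End IncreasingLabels.

Theorem mainTheorem4 (m n : nat) (a : nat -> nat) :
  (1 < m)%N -> (2 <= n)%N ->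
  (forall s : nat, (1 <= s <= r n)%N ->
     [/\ (0 < a s)%N, (a s %| m)%N & zero_divisor ((a s)%:R : 'Z_m)]) ->
  ((forall s : nat, (1 <= s < r n)%N -> (a s.+1 %| a s)%N) ->
     (a 1 %| m)%N -> a 1%N <> m ->
     min_flow_up_gen_set a (B1 m n a) /\ #|B1 m n a| = n)
  /\
  ((forall s : nat, (1 <= s < r n)%N -> (a s %| a s.+1)%N) ->
     (a (r n) %| m)%N -> a (r n) <> m ->
     min_flow_up_gen_set a (B2 m n a) /\ #|B2 m n a| = n).
Proof.
(* The labels are positive divisors of m by the divisor chain. *)
case: m => [|[|m]] // _ n_gt1 _; have n_gt0 : (0 < n)%N by apply: ltnW.
split=> [a_dec a1_dvd a1_neq | a_inc aN_dvd aN_neq].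
- exact: (B1_min_flow_up n_gt0 a_dec a1_dvd a1_neq).
- exact: (B2_min_flow_up n_gt0 a_inc aN_dvd aN_neq).
Qed.
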